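(* Let $A\in M_N(\{0,1\})$ be primitive. The quantity $\tau(F_A)=\int F_A\,d\tau$ is independent of $\tau\in\mathcal M_{\sigma,e}$ if and only if there is a constant $c>0$ such that for every $n\in\mathbb N$ and every $\gamma=\gamma_1\cdots\gamma_n\in V_A^n$ with $A_{\gamma_n,\gamma_1}=1$, $$\frac1n\sum_{i=1}^nu_{\gamma_i}=c.$$ Moreover, this can happen only for $c=\sum_{i=1}^Np_iu_i$. Further, $F_A$ is constant if and only if all row-sums of $A$ are equal.
   Context: $A\in M_N(\{0,1\})$ primitive; $V_A^n$ is the set of words $\gamma_1\cdots\gamma_n$ over $\{1,\dots,N\}$ with $A_{\gamma_k,\gamma_{k+1}}=1$ for all $k$; $\Omega_A=\{x\in\{1,\dots,N\}^{\mathbb N}:A_{x_n,x_{n+1}}=1\ \forall n\}$ with left shift $\sigma$. $\mathcal M_{\sigma,e}$ denotes the set of $\sigma$-invariant ergodic Borel probability measures on $\Omega_A$. $\lambda_A$ is the Perron–Frobenius eigenvalue, $u>0$ with $Au=\lambda_Au$, $\sum u_i=1$, $v>0$ with $A^Tv=\lambda_Av$, $\sum u_iv_i=1$, $p_i=u_iv_i$, $P_{i,j}=A_{i,j}u_j/(\lambda_Au_i)$, and $F_A(x)=u_{x_1}(1-P_{x_1,x_2})$. *)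

From HB Require Import structures.
From mathcomp Require Import all_boot all_order all_algebra.
From mathcomp Require Import all_classical all_reals all_analysis.
Set Implicit Arguments. Unset Strict Implicit. Unset Printing Implicit Defensive.
Import Order.TTheory GRing.Theory Num.Theory.
Local Open Scope classical_set_scope.
Local Open Scope ring_scope.

(* The alphabet {1,...,N} is represented by 'I_N with N = n.+1
   (N >= 1 is forced anyway by the normalisation sum_i u_i = 1). *)

Definition zero_one_mx (R : nzRingType) (n : nat) (A : 'M[R]_n.+1) : Prop :=
  forall i j, A i j = 0 \/ A i j = 1.

Definition primitive_mx (R : numDomainType) (n : nat) (A : 'M[R]_n.+1) : Prop :=
  exists k : nat, forall i j, 0 < (A ^+ k) i j.

(* One-sided full shift on N symbols: sequences x_1 x_2 ... stored as x 0, x 1, ... *)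
Definition fullshift (n : nat) := nat -> 'I_n.+1.
HB.instance Definition _ (n : nat) := gen_eqMixin (fullshift n).
HB.instance Definition _ (n : nat) := gen_choiceMixin (fullshift n).
HB.instance Definition _ (n : nat) :=
  isPointed.Build (fullshift n) (fun _ => ord0).

Definition cylinders (n : nat) : set (set (fullshift n)) :=
  [set B | exists (k : nat) (a : 'I_n.+1), B = [set x : fullshift n | x k = a]].

(* Measurable space: sigma-algebra generated by the one-coordinate cylinders
   (= Borel sigma-algebra of the product topology). *)
Notation seqspace n := (g_sigma_algebraType (@cylinders n)).

Definition shift (n : nat) (x : seqspace n) : seqspace n := fun k => x k.+1.

Definition OmegaA (R : nzRingType) (n : nat) (A : 'M[R]_n.+1) : set (seqspace n) :=
  [set x | forall k : nat, A (x k) (x k.+1) = 1].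

(* sigma-invariant ergodic Borel probability measures on Omega_A,
   viewed as probability measures on the full shift carried by Omega_A. *)
Definition invariant_ergodic_on (R : realType) (n : nat) (A : 'M[R]_n.+1)
    (P : probability (seqspace n) R) : Prop :=
  [/\ P (OmegaA A) = 1%E,
      (forall B : set (seqspace n), measurable B ->
          P (@shift n @^-1` B) = P B) &
      (forall B : set (seqspace n), measurable B ->
          @shift n @^-1` B = B -> P B = 0%E \/ P B = 1%E)].

Definition Pmx (R : realType) (n : nat) (A : 'M[R]_n.+1) (lam : R)
    (u : 'cV[R]_n.+1) (i j : 'I_n.+1) : R :=
  A i j * u j ord0 / (lam * u i ord0).

Definition FA (R : realType) (n : nat) (A : 'M[R]_n.+1) (lam : R)
    (u : 'cV[R]_n.+1) (x : seqspace n) : R :=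
  u (x 0%N) ord0 * (1 - Pmx A lam u (x 0%N) (x 1%N)).

Definition admissible_cycle (R : nzRingType) (n m : nat) (A : 'M[R]_n.+1)
    (g : 'I_m.+1 -> 'I_n.+1) : Prop :=
  (forall k : nat, (k < m)%N -> A (g (inord k)) (g (inord k.+1)) = 1) /\
  A (g ord_max) (g ord0) = 1.

Definition cycle_average_const (R : realType) (n : nat) (A : 'M[R]_n.+1)
    (u : 'cV[R]_n.+1) (c : R) : Prop :=
  forall (m : nat) (g : 'I_m.+1 -> 'I_n.+1), admissible_cycle A g ->
    (m.+1%:R)^-1 * (\sum_(i < m.+1) u (g i) ord0) = c.

From Pilot Require Import Defs.
From HB Require Import structures.
From mathcomp Require Import all_boot all_order all_algebra.
From mathcomp Require Import all_classical all_reals all_analysis.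
From mathcomp Require Import measurable_realfun ring lra.
Import Order.TTheory GRing.Theory Num.Theory.
Local Open Scope classical_set_scope.
Local Open Scope ring_scope.
Set Implicit Arguments. Unset Strict Implicit. Unset Printing Implicit Defensive.

(** For a shift-invariant probability P carried by Omega_A, the law q of
    (x_0, x_1) lives on the edges of A and has equal marginals.  Since
    F_A(x) = u_{x_0} - u_{x_1} / lambda on Omega_A, this gives
    int F_A dP = (1 - 1/lambda) int u_{x_0} dP.  The uniform measures on periodic
    orbits then show that a constant integral forces all cycle averages of u to
    agree (lambda = 1 only when u = 1).  Conversely, by primitivity, constant cycle
    averages c give a potential h with u_a - c = h_b - h_a on every edge a -> b,
    so that int u_{x_0} dP = c for all such P; the same computation with the
    Parry weights v_a A_ab u_b / lambda identifies c = sum_i p_i u_i.  Finally F_A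
    is constant on Omega_A iff u is constant, iff all row sums of A equal lambda. *)

Lemma sumr_delta (R : nzSemiRingType) (I : finType) (F : I -> R) (x : I) :
  \sum_i F i * (x == i)%:R = F x.
Proof.
rewrite (bigD1 x) //= eqxx mulr1 big1 ?addr0 // => i.
by rewrite eq_sym => /negbTE ->; rewrite mulr0.
Qed.

Section BalancedWeights.
Variables (R : comPzRingType) (I : finType).
Implicit Types (q : I -> I -> R) (f h : I -> R).

Definition balanced q := forall a, \sum_b q a b = \sum_b q b a.

Lemma balanced_sum_swap q h :
  balanced q -> \sum_a \sum_b q a b * h b = \sum_a \sum_b q a b * h a.
Proof.
by move=> bal; rewrite exchange_big /=; apply: eq_bigr => a _; rewrite -!mulr_suml bal.
Qed.

Lemma balanced_mean_potential (e : rel I) q f h c :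
  balanced q -> (forall a b, ~~ e a b -> q a b = 0) -> \sum_a \sum_b q a b = 1 ->
  (forall a b, e a b -> f a - c = h b - h a) ->
  \sum_a \sum_b q a b * f a = c.
Proof.
move=> bal supp mass pot.
have split_f a b : q a b * f a = c * q a b + (q a b * h b - q a b * h a).
  have [eab | neab] := boolP (e a b); last by rewrite supp // !mul0r mulr0 subrr addr0.
  by rewrite -mulrBr -pot //; ring.
transitivity (c * \sum_a \sum_b q a b +
              (\sum_a \sum_b q a b * h b - \sum_a \sum_b q a b * h a)).
  rewrite mulr_sumr -sumrB -big_split; apply: eq_bigr => a _.
  by rewrite mulr_sumr -sumrB -big_split; apply: eq_bigr => b _.
by rewrite balanced_sum_swap // subrr addr0 mass mulr1.
Qed.

End BalancedWeights.

Section ShiftSpace.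
Variable n : nat.
Implicit Types a b : 'I_n.+1.

Lemma measurable_coord k a : measurable [set x : seqspace n | x k = a].
Proof. by apply: sub_sigma_algebra; exists k, a. Qed.

Lemma measurable_coord2 (T : Type) k l (G : 'I_n.+1 -> 'I_n.+1 -> T) (Y : set T) :
  measurable [set x : seqspace n | Y (G (x k) (x l))].
Proof.
have -> : [set x : seqspace n | Y (G (x k) (x l))] =
    \bigcup_(p in [set p | Y (G p.1 p.2)])
      ([set x : seqspace n | x k = p.1] `&` [set x | x l = p.2]).
  apply/seteqP; split => [x Yx | x [p Yp [e1 e2]]]; last by move: Yp; rewrite /= -e1 -e2.
  by exists (x k, x l).
apply: fin_bigcup_measurable => [|p _]; first exact: finite_finset.
by apply: measurableI; exact: measurable_coord.
Qed.

Lemma measurable_fun_coord01 (R : realType) (G : 'I_n.+1 -> 'I_n.+1 -> R) :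
  measurable_fun setT (fun x : seqspace n => (G (x 0%N) (x 1%N))%:E : \bar R).
Proof.
move=> _ Y _; rewrite setTI.
exact: (measurable_coord2 0 1 (fun a b => (G a b)%:E) Y).
Qed.

Definition cylinder01 a b : set (seqspace n) := [set x | (x 0%N, x 1%N) = (a, b)].

Lemma measurable_cylinder01 a b : measurable (cylinder01 a b).
Proof. exact: (measurable_coord2 0 1 pair [set (a, b)]). Qed.

Lemma measurable_OmegaA (R : nzRingType) (A : 'M[R]_n.+1) : measurable (OmegaA A).
Proof.
have -> : OmegaA A = \bigcap_k [set x : seqspace n | A (x k) (x k.+1) = 1].
  by apply/seteqP; split => x Ax k; [move=> _ | ]; exact: Ax.
apply: bigcapT_measurable => k.
exact: (measurable_coord2 k k.+1 A [set 1]).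
Qed.

End ShiftSpace.

Section PairDistribution.
Variables (R : realType) (n : nat) (P : probability (seqspace n) R).
Implicit Types a b : 'I_n.+1.

Definition pairdist a b : R := fine (P (cylinder01 a b)).

Lemma pairdistE a b : (pairdist a b)%:E = P (cylinder01 a b).
Proof. by rewrite fineK // fin_num_measure //; exact: measurable_cylinder01. Qed.

Lemma pairdist_ge0 a b : 0 <= pairdist a b.
Proof. by rewrite -lee_fin pairdistE measure_ge0. Qed.

Lemma integral_coord01 (G : 'I_n.+1 -> 'I_n.+1 -> R) :
  (forall a b, 0 <= G a b) ->
  (\int[P]_x (G (x 0%N) (x 1%N))%:E = (\sum_a \sum_b pairdist a b * G a b)%:E)%E.
Proof.
move=> G0.
have split_pairs x : (G (x 0%N) (x 1%N))%:E =
    (\sum_a \sum_b (G a b * \1_(cylinder01 a b) x)%:E)%E.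
  rewrite pair_bigA sumEFin /=; congr _%:E.
  under eq_bigr => p _ do rewrite indicE.
  rewrite -[LHS](sumr_delta (fun p => G p.1 p.2) (x 0%N, x 1%N)).
  apply: eq_bigr => -[a b] _ /=; congr (_ * _%:R).
  by case: eqP => [e | ne]; [rewrite mem_set | rewrite memNset].
have mG a b : measurable_fun setT (fun x => (G a b * \1_(cylinder01 a b) x)%:E : \bar R).
  apply/measurable_EFinP; apply: measurable_funM => //.
  by apply: measurable_indic; exact: measurable_cylinder01.
under eq_integral do rewrite split_pairs.
rewrite ge0_integral_sum //; last first.
- by move=> a x _; apply: sume_ge0 => b _; rewrite lee_fin mulr_ge0.
- by move=> a; apply: emeasurable_sum => b; exact: mG.
rewrite -sumEFin; apply: eq_bigr => a _.
rewrite ge0_integral_sum //; last by move=> b x _; rewrite lee_fin mulr_ge0.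
rewrite -sumEFin; apply: eq_bigr => b _.
rewrite (integralZl_indic _ (fun _ => cylinder01 a b)) //; last first.
- exact: measurable_cylinder01.
- by rewrite ltNge G0.
by rewrite integral_indic ?setIT ?EFinM ?pairdistE 1?muleC //; exact: measurable_cylinder01.
Qed.

Lemma pairdist_sum1 : \sum_a \sum_b pairdist a b = 1.
Proof.
have := integral_coord01 (fun _ _ => ler01).
rewrite integral_cst // [X in (_ * X)%E](_ : _ = 1%E) ?mule1; last exact: probability_setT.
move=> -[] ->.
by apply: eq_bigr => a _; apply: eq_bigr => b _; rewrite mulr1.
Qed.

Lemma probability_coord01 (G : 'I_n.+1 -> 'I_n.+1 -> 'I_n.+1) a :
  P [set x | G (x 0%N) (x 1%N) = a] = (\sum_a' \sum_b pairdist a' b * (a == G a' b)%:R)%:E.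
Proof.
rewrite -[X in P X]setIT -integral_indic //; last exact: (measurable_coord2 0 1 G [set a]).
rewrite -integral_coord01 => [|a' b]; last exact: ler0n.
apply: eq_integral => x _; rewrite indicE; congr (_%:R)%:E.
by case: eqP => [-> | ne]; [rewrite mem_set | rewrite memNset // => /esym].
Qed.

Lemma pairdist_balanced :
  (forall B, measurable B -> P (@Defs.shift n @^-1` B) = P B) -> balanced pairdist.
Proof.
move=> inv a.
have first_coord : P [set x | x 0%N = a] = (\sum_b pairdist a b)%:E.
  rewrite (probability_coord01 (fun a' _ => a')); congr _%:E.
  by under eq_bigr do rewrite -mulr_suml; rewrite sumr_delta.
have second_coord : P [set x | x 1%N = a] = (\sum_b pairdist b a)%:E.
  rewrite (probability_coord01 (fun _ b => b)); congr _%:E.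
  by apply: eq_bigr => a' _; exact: sumr_delta.
have := inv _ (measurable_coord 0 a).
rewrite (_ : _ @^-1` _ = [set x | x 1%N = a]) // first_coord second_coord.
by move=> -[].
Qed.

Lemma pairdist_OmegaA (S : nzRingType) (A : 'M[S]_n.+1) :
  P (OmegaA A) = 1%E -> forall a b, A a b != 1 -> pairdist a b = 0.
Proof.
move=> PO a b Aab; apply/eqP; rewrite eq_le pairdist_ge0 andbT -lee_fin pairdistE.
have sub : cylinder01 a b `<=` ~` OmegaA A.
  by move=> x [x0 x1] /(_ 0%N); rewrite x0 x1; apply/eqP.
have PC : P (~` OmegaA A) = 0%:E.
  by rewrite probability_setC ?PO ?subee //; exact: measurable_OmegaA.
rewrite -PC; apply: le_measure => //; rewrite inE; first exact: measurable_cylinder01.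
by apply: measurableC; exact: measurable_OmegaA.
Qed.

End PairDistribution.

Section OrbitMeasure.
Variables (R : realType) (n m : nat) (g : 'I_m.+1 -> 'I_n.+1).

Definition orbit_point (t : nat) : seqspace n := fun k => g (inZp (t + k)).

(* The fallback argument of [mnormalize] is never used: the mass is m + 1. *)
Definition orbit_prob : probability (seqspace n) R :=
  mnormalize (msum (fun t => \d_(orbit_point t)) m.+1) \d_(orbit_point 0).

Lemma orbit_countE S : msum (fun t => \d_(orbit_point t)) m.+1 S =
  (\sum_(t < m.+1) (orbit_point t \in S)%:R)%:E :> \bar R.
Proof. by rewrite /msum -sumEFin; apply: eq_bigr => t _; exact: diracE. Qed.

Lemma orbit_probE S :
  orbit_prob S = ((\sum_(t < m.+1) (orbit_point t \in S)%:R) / m.+1%:R)%:E.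
Proof.
have total : msum (fun t => \d_(orbit_point t)) m.+1 setT = m.+1%:R%:E :> \bar R.
  by rewrite orbit_countE; under eq_bigr do rewrite mem_set //; rewrite sumr_const card_ord.
rewrite /orbit_prob /= /mnormalize /= total eqe pnatr_eq0 /= orbit_countE.
by rewrite -EFinM.
Qed.

Lemma integral_orbit_prob (f : seqspace n -> \bar R) :
  (forall x, 0 <= f x)%E -> measurable_fun setT f ->
  (\int[orbit_prob]_x f x = (m.+1%:R^-1)%:E * \sum_(t < m.+1) f (orbit_point t))%E.
Proof.
move=> f0 mf.
rewrite (eq_measure_integral
  (mscale (m.+1%:R^-1)%:nng (msum (fun t => \d_(orbit_point t)) m.+1))); last first.
  move=> S _ _; apply: etrans (orbit_probE S) _.
  by rewrite /= /mscale /= orbit_countE -EFinM mulrC.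
rewrite ge0_integral_mscale // ge0_integral_measure_sum //; congr (_ * _)%E.
by apply: eq_bigr => t _; rewrite integral_dirac // diracT mul1e.
Qed.

Lemma orbit_point_shift t : Defs.shift (orbit_point t) = orbit_point t.+1.
Proof. by apply/funext => k; rewrite /Defs.shift /orbit_point addSnnS. Qed.

Lemma orbit_point_period : orbit_point m.+1 = orbit_point 0.
Proof. by apply/funext => k; congr (g _); apply/val_inj; rewrite /= modnDl. Qed.

Lemma orbit_prob_shift B : orbit_prob (@Defs.shift n @^-1` B) = orbit_prob B.
Proof.
rewrite !orbit_probE; congr ((_ / _)%:E).
have shifted t : (orbit_point t \in @Defs.shift n @^-1` B) = (orbit_point t.+1 \in B).
  by rewrite -orbit_point_shift.
under eq_bigr do rewrite shifted.
rewrite big_ord_recr big_ord_recl /= addrC orbit_point_period.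
by congr (_ + _); apply: eq_bigr => t _; rewrite /bump /=.
Qed.

Lemma orbit_prob_ergodic B :
  @Defs.shift n @^-1` B = B -> orbit_prob B = 0%E \/ orbit_prob B = 1%E.
Proof.
move=> invB.
have in_B t : (orbit_point t \in B) = (orbit_point 0 \in B).
  by elim: t => // t IH; rewrite -orbit_point_shift -IH -{2}invB.
rewrite orbit_probE; under eq_bigr do rewrite in_B.
rewrite sumr_const card_ord.
by case: (orbit_point 0 \in B); [right; rewrite divff ?pnatr_eq0 | left; rewrite mul0rn mul0r].
Qed.

Lemma admissible_cycle_ordS (S : nzRingType) (A : 'M[S]_n.+1) :
  admissible_cycle A g -> forall i, A (g i) (g (ordS i)) = 1.
Proof.
move=> [edges closing] i.
have [lt_im | ge_im] := ltnP i m.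
  rewrite (_ : ordS i = inord i.+1); first by have := edges i lt_im; rewrite inord_val.
  by apply/val_inj; rewrite /= inordK ?modn_small.
have -> : i = ord_max by apply/val_inj/eqP; rewrite eqn_leq ge_im -ltnS ltn_ord.
by rewrite (_ : ordS ord_max = ord0) //; apply/val_inj; rewrite /= modnn.
Qed.

Lemma inZpS j : inZp j.+1 = ordS (inZp j : 'I_m.+1).
Proof. by apply/val_inj; rewrite /= -addn1 -[in RHS]addn1 modnDml. Qed.

Lemma orbit_point_OmegaA (S : nzRingType) (A : 'M[S]_n.+1) :
  admissible_cycle A g -> forall t, OmegaA A (orbit_point t).
Proof. by move=> adm t k; rewrite /orbit_point addnS inZpS; exact: admissible_cycle_ordS. Qed.

Lemma orbit_prob_invariant_ergodic (A : 'M[R]_n.+1) :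
  admissible_cycle A g -> invariant_ergodic_on A orbit_prob.
Proof.
move=> adm; split=> [|B _|B _]; [|exact: orbit_prob_shift|exact: orbit_prob_ergodic].
have inO t : orbit_point t \in OmegaA A by exact/mem_set/orbit_point_OmegaA.
rewrite orbit_probE; under eq_bigr do rewrite inO.
by rewrite sumr_const card_ord divff ?pnatr_eq0.
Qed.

Lemma integral_orbit_prob_coord0 (f : 'I_n.+1 -> R) : (forall a, 0 <= f a) ->
  (\int[orbit_prob]_x (f (x 0%N))%:E = ((m.+1%:R)^-1 * \sum_i f (g i))%:E)%E.
Proof.
move=> f0; rewrite integral_orbit_prob; last 2 first.
- by move=> x; rewrite lee_fin.
- exact: (measurable_fun_coord01 (fun a _ => f a)).
rewrite EFinM -sumEFin; congr (_ * _)%E; apply: eq_bigr => t _.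
by rewrite /orbit_point addn0; congr (f (g _))%:E; apply/val_inj; rewrite /= modn_small.
Qed.

End OrbitMeasure.

Section Walks.
Variables (R : archiRealDomainType) (n : nat) (A : 'M[R]_n.+1).
Hypothesis A01 : zero_one_mx A.
Local Notation edge := (fun a b => A a b == 1).

Lemma zero_one_mx_pow_nat k i j : (A ^+ k) i j \is a Num.nat.
Proof.
elim: k i j => [|k IH] i j; first by rewrite expr0 mxE natr_nat.
rewrite exprSr -mulmxE mxE; apply: rpred_sum => l _; apply: rpredM => //.
by case: (A01 l j) => ->; [exact: nat_num0 | exact: nat_num1].
Qed.

Lemma walk_of_pow_gt0 k i j : 0 < (A ^+ k) i j ->
  exists s, [/\ size s = k, path edge i s & last i s = j].
Proof.
elim: k j => [|k IH] j.
  by rewrite expr0 mxE; case: eqP => [<- _ | _]; [exists [::] | rewrite ltxx].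
rewrite exprSr -mulmxE mxE => sum_gt0.
have [l ikl_gt0] : exists l, 0 < (A ^+ k) i l * A l j.
  apply/not_existsP => none; move: sum_gt0; rewrite ltNge => /negP; apply.
  by apply: sumr_le0 => l _; rewrite leNgt; apply/negP => /none.
have Alj : A l j = 1 by case: (A01 l j) => // Alj; move: ikl_gt0; rewrite Alj mulr0 ltxx.
rewrite Alj mulr1 in ikl_gt0; have [s [size_s walk_s last_s]] := IH _ ikl_gt0.
exists (rcons s j); rewrite size_rcons rcons_path last_rcons last_s Alj eqxx walk_s.
by split; rewrite ?size_s.
Qed.

Lemma admissible_cycle_nth x p :
  cycle edge (x :: p) -> admissible_cycle A (fun t : 'I_(size p).+1 => nth x (x :: p) t).
Proof.
rewrite /= rcons_path => /andP[/(pathP x) walk closing]; split.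
  move=> k lt_kp; have k_lt : (k < (size p).+1)%N by rewrite ltnS ltnW.
  by rewrite !inordK ?ltnS //; apply/eqP; exact: (walk k lt_kp).
have -> : nth x (x :: p) ord_max = last x p := nth_last x (x :: p).
exact/eqP.
Qed.

Lemma path_geometric (lam : R) (w : 'I_n.+1 -> R) i s :
  (forall a b, A a b = 1 -> w b = lam * w a) ->
  path edge i s -> w (last i s) = lam ^+ size s * w i.
Proof.
move=> step; elim: s i => [|j s IH] i /=; first by rewrite mul1r.
by move=> /andP[/eqP Aij /IH ->]; rewrite (step _ _ Aij) exprSr mulrA.
Qed.

Lemma exists_admissible_cycle K :
  (0 < K)%N -> (forall i j, 0 < (A ^+ K) i j) ->
  exists m (g : 'I_m.+1 -> 'I_n.+1), admissible_cycle A g.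
Proof.
move=> K_gt0 AK_gt0; have [s [size_s walk_s last_s]] := walk_of_pow_gt0 (AK_gt0 ord0 ord0).
case/lastP: s => [|p y] in size_s walk_s last_s; first by rewrite -size_s in K_gt0.
rewrite last_rcons in last_s; subst y.
by exists (size p), (fun t => nth ord0 (ord0 :: p) t); exact: admissible_cycle_nth.
Qed.

End Walks.

Section CycleAverages.
Variables (R : realType) (n : nat) (A : 'M[R]_n.+1) (u : 'cV[R]_n.+1) (c : R).
Hypotheses (A01 : zero_one_mx A) (avg_c : cycle_average_const A u c).
Local Notation edge := (fun a b => A a b == 1).
Local Notation f a := (u a ord0 - c).

Lemma cycle_sum_zero x p : cycle edge (x :: p) -> \sum_(a <- x :: p) f a = 0.
Proof.
move=> cyc; have := avg_c (admissible_cycle_nth cyc).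
rewrite (big_nth x) big_mkord sumrB sumr_const card_ord /= => avg.
set S := \sum_(i < _) _.
by rewrite -avg -mulrnAr -(mulr_natl S) mulKf ?pnatr_eq0 // subrr.
Qed.

Lemma closed_walk_sum_zero x s :
  path edge x s -> last x s = x -> (0 < size s)%N -> \sum_(a <- belast x s) f a = 0.
Proof.
case/lastP: s => [|p y] //; rewrite last_rcons => cyc y_x _; subst y.
by rewrite belast_rcons; exact: cycle_sum_zero.
Qed.

Lemma potential_of_cycle_average K :
  (0 < K)%N -> (forall i j, 0 < (A ^+ K) i j) ->
  exists h : 'I_n.+1 -> R, forall a b, A a b = 1 -> u a ord0 - c = h b - h a.
Proof.
move=> K_gt0 AK_gt0.
have /choice[z to0] j : exists s, [/\ size s = K, path edge j s & last j s = ord0].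
  exact: (walk_of_pow_gt0 A01 (AK_gt0 j ord0)).
(* H j weighs a fixed walk from j to ord0; closing the walks
   a -> ord0 -> a and a -> b -> ord0 -> a gives f a = H a - H b. *)
pose H j := \sum_(a <- belast j (z j)) f a.
exists (fun j => - H j) => a b Aab.
have [size_za walk_za last_za] := to0 a.
have [_ walk_zb last_zb] := to0 b.
have [y [_ walk_y last_y]] := walk_of_pow_gt0 A01 (AK_gt0 ord0 a).
have loop_a := closed_walk_sum_zero (x := a) (s := z a ++ y).
rewrite cat_path last_cat last_za walk_za walk_y last_y size_cat size_za in loop_a.
rewrite belast_cat last_za big_cat /= in loop_a.
have loop_ab := closed_walk_sum_zero (x := a) (s := b :: z b ++ y).
rewrite /= cat_path last_cat last_zb walk_zb walk_y last_y Aab eqxx in loop_ab.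
rewrite belast_cat last_zb big_cons big_cat /= in loop_ab.
rewrite -/(H a) in loop_a; rewrite -/(H b) in loop_ab.
have := loop_a erefl erefl (ltn_addr _ K_gt0); have := loop_ab erefl erefl erefl.
lra.
Qed.

End CycleAverages.

Section Eigenvectors.
Variables (R : comPzRingType) (n : nat) (A : 'M[R]_n.+1) (lam : R) (w : 'cV[R]_n.+1).
Hypothesis Aw : A *m w = lam *: w.

Lemma eigenvector_row i : \sum_j A i j * w j ord0 = lam * w i ord0.
Proof. by have := congr1 (fun M : 'cV_n.+1 => M i ord0) Aw; rewrite !mxE. Qed.

Lemma eigenvector_pow k : A ^+ k *m w = lam ^+ k *: w.
Proof.
elim: k => [|k IH]; first by rewrite !expr0 scale1r mul1mx.
by rewrite exprS -mulmxE -mulmxA IH -scalemxAr Aw scalerA exprSr.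
Qed.

End Eigenvectors.

Lemma nonneg_eigenvector_eq0 (R : realDomainType) n (A : 'M[R]_n.+1) lam
    (w : 'cV[R]_n.+1) K i0 :
  (forall i j, 0 < (A ^+ K) i j) -> A *m w = lam *: w ->
  (forall j, 0 <= w j ord0) -> w i0 ord0 = 0 -> forall j, w j ord0 = 0.
Proof.
move=> AK_gt0 Aw w_ge0 w_i0 j.
have := eigenvector_row (eigenvector_pow Aw K) i0; rewrite w_i0 mulr0 => sum0.
have /eqP := psumr_eq0P (fun l _ => mulr_ge0 (ltW (AK_gt0 i0 l)) (w_ge0 l)) sum0 (i := j) isT.
by rewrite mulf_eq0 gt_eqF //= => /eqP.
Qed.

Section PerronEigenvector.
Variables (R : realType) (n : nat) (A : 'M[R]_n.+1) (lam : R) (u : 'cV[R]_n.+1).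
Hypotheses (A01 : zero_one_mx A) (lam_gt0 : 0 < lam) (u_gt0 : forall i, 0 < u i ord0).
Hypothesis Au : A *m u = lam *: u.

Lemma zero_one_mx_ge0 i j : 0 <= A i j.
Proof. by case: (A01 i j) => ->. Qed.

Lemma exists_successor i : exists j, A i j = 1.
Proof.
apply/not_existsP => none; have := eigenvector_row Au i.
rewrite big1 => [|j _]; first by move/eqP; rewrite eq_sym mulf_eq0 !gt_eqF.
by case: (A01 i j) => [-> | /none //]; rewrite mul0r.
Qed.

Lemma primitive_pow_gt0 : primitive_mx A ->
  exists K, (0 < K)%N /\ forall i j, 0 < (A ^+ K) i j.
Proof.
move=> [k Ak_gt0]; exists k.+1; split => // i j.
have [l Ail] := exists_successor i.
rewrite exprS -mulmxE mxE (bigD1 l) //= Ail mul1r ltr_pwDl //.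
apply: sumr_ge0 => l' _; apply: mulr_ge0; first exact: zero_one_mx_ge0.
exact/natr_ge0/zero_one_mx_pow_nat.
Qed.

Lemma perron_root_eq1 K : (forall i j, 0 < (A ^+ K) i j) -> \sum_i u i ord0 = 1 ->
  lam = 1 -> forall i, u i ord0 = 1.
Proof.
move=> AK_gt0 u_sum1 lam1 i; apply/eqP; rewrite eq_le; apply/andP; split.
  rewrite -u_sum1 (bigD1 i) //= lerDl; apply: sumr_ge0 => j _; exact: ltW.
have := eigenvector_row (eigenvector_pow Au K) i; rewrite lam1 expr1n mul1r => <-.
rewrite -[X in X <= _]u_sum1; apply: ler_sum => j _; rewrite ler_peMl ?(ltW (u_gt0 j)) //.
have := AK_gt0 i j; have /natrP[k ->] := zero_one_mx_pow_nat A01 K i j.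
by rewrite ltr0n ler1n.
Qed.

Lemma FAE x :
  FA A lam u x = u (x 0%N) ord0 - A (x 0%N) (x 1%N) * u (x 1%N) ord0 / lam.
Proof. by rewrite /FA /Pmx; field; rewrite !gt_eqF. Qed.

Lemma FA_pair_ge0 a b : 0 <= u a ord0 - A a b * u b ord0 / lam.
Proof.
rewrite subr_ge0 ler_pdivrMr // [u a ord0 * lam]mulrC -(eigenvector_row Au a).
rewrite (bigD1 b) //= lerDl.
by apply: sumr_ge0 => j _; rewrite mulr_ge0 ?zero_one_mx_ge0 ?ltW.
Qed.

Lemma cycle_average_value (v : 'cV[R]_n.+1) c (h : 'I_n.+1 -> R) :
  A^T *m v = lam *: v -> \sum_i u i ord0 * v i ord0 = 1 ->
  (forall a b, A a b = 1 -> u a ord0 - c = h b - h a) ->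
  c = \sum_i (u i ord0 * v i ord0) * u i ord0.
Proof.
move=> ATv uv1 pot.
(* The Parry weights: balanced, carried by the edges, first marginal u_a v_a. *)
pose q a b := v a ord0 * A a b * u b ord0 / lam.
have out_mass a : \sum_b q a b = u a ord0 * v a ord0.
  rewrite -mulr_suml; under eq_bigr do rewrite -mulrA; rewrite -mulr_sumr.
  by rewrite (eigenvector_row Au); field; rewrite gt_eqF.
have in_mass a : \sum_b q b a = u a ord0 * v a ord0.
  have col : \sum_b v b ord0 * A b a = lam * v a ord0.
    by rewrite -(eigenvector_row ATv a); apply: eq_bigr => b _; rewrite mxE mulrC.
  by rewrite -!mulr_suml col; field; rewrite gt_eqF.
have bal : balanced q by move=> a; rewrite out_mass in_mass.
have supp a b : ~~ (A a b == 1) -> q a b = 0.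
  by rewrite /q; case: (A01 a b) => ->; rewrite ?eqxx // mulr0 !mul0r.
have mass : \sum_a \sum_b q a b = 1 by under eq_bigr do rewrite out_mass.
rewrite -(balanced_mean_potential bal supp mass (fun a b Aab => pot a b (eqP Aab))).
by apply: eq_bigr => a _; rewrite -mulr_suml out_mass.
Qed.

Lemma rowsum_eq_of_u_const M : (forall i, u i ord0 = M) -> forall i, \sum_j A i j = lam.
Proof.
move=> uM i; apply: (mulIf (lt0r_neq0 (u_gt0 i))).
by rewrite -(eigenvector_row Au i) mulr_suml; apply: eq_bigr => j _; rewrite !uM.
Qed.

Lemma u_const_of_rowsum_eq (v : 'cV[R]_n.+1) K r :
  (forall i j, 0 < (A ^+ K) i j) -> (forall i, 0 < v i ord0) -> A^T *m v = lam *: v ->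
  (forall i, \sum_j A i j = r) -> forall i j, u i ord0 = u j ord0.
Proof.
move=> AK_gt0 v_gt0 ATv rows.
have lam_r : lam = r.
  have v_sum_gt0 : 0 < \sum_i v i ord0.
    by rewrite (bigD1 ord0) //= ltr_pwDl // sumr_ge0 // => i _; exact: ltW.
  apply: (mulIf (lt0r_neq0 v_sum_gt0)); rewrite mulr_sumr [RHS]mulr_sumr.
  under eq_bigr do rewrite -(eigenvector_row ATv).
  rewrite exchange_big /=; apply: eq_bigr => i _.
  by rewrite -(rows i) mulr_suml; apply: eq_bigr => j _; rewrite mxE.
have [i0 _ u_max] := @arg_maxP _ _ _ ord0 xpredT (fun i => u i ord0) isT.
pose w := \col_i (u i0 ord0 - u i ord0).
have Aw : A *m w = lam *: w.
  apply/matrixP => i k; rewrite ord1 !mxE; under eq_bigr do rewrite mxE.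
  rewrite mulrBr -(eigenvector_row Au i) lam_r -(rows i) mulr_suml -sumrB.
  by apply: eq_bigr => j _; rewrite mulrBr.
have w_ge0 j : 0 <= w j ord0 by rewrite mxE subr_ge0; exact: u_max.
have w_i0 : w i0 ord0 = 0 by rewrite mxE subrr.
have u_i0 k : u k ord0 = u i0 ord0.
  have /eqP := nonneg_eigenvector_eq0 AK_gt0 Aw w_ge0 w_i0 k.
  by rewrite mxE subr_eq0 eq_sym => /eqP.
by move=> i j; rewrite !u_i0.
Qed.

Lemma u_const_of_FA_const K k :
  (0 < K)%N -> (forall i j, 0 < (A ^+ K) i j) -> \sum_i u i ord0 = 1 ->
  (forall x, OmegaA A x -> FA A lam u x = k) -> forall i j, u i ord0 = u j ord0.
Proof.
move=> K_gt0 AK_gt0 u_sum1 FA_k.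
have [lam1 | lam_neq1] := eqVneq lam 1.
  by move=> i j; rewrite !(perron_root_eq1 AK_gt0 u_sum1 lam1).
have /choice[next next_edge] := exists_successor.
have edge_step a b : A a b = 1 -> u a ord0 - u b ord0 / lam = k.
  move=> Aab; pose x : seqspace n := fun t => if t is t'.+1 then iter t' next b else a.
  have Ox : OmegaA A x by case=> [|t] //=; exact: next_edge.
  by rewrite -(FA_k x Ox) FAE /= Aab mul1r.
pose w a := (lam - 1) * u a ord0 - lam * k.
have w_step a b : A a b = 1 -> w b = lam * w a.
  by move=> Aab; rewrite /w -(edge_step a b Aab); field; rewrite gt_eqF.
have w0 i : w i = 0.
  have [s [size_s walk_s last_s]] := walk_of_pow_gt0 A01 (AK_gt0 i i).
  have := path_geometric w_step walk_s; rewrite last_s size_s => /eqP.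
  rewrite -subr_eq0 -{1}[w i]mul1r -mulrBl mulf_eq0 subr_eq0 eq_sym.
  by rewrite pexpr_eq1 ?ltW // (negbTE lam_neq1) => /eqP.
have wE i : (lam - 1) * u i ord0 = lam * k by apply/eqP; rewrite -subr_eq0 -/(w i) w0.
have lam1_neq0 : lam - 1 != 0 by rewrite subr_eq0.
by move=> i j; apply: (mulfI lam1_neq0); rewrite !wE.
Qed.

Section InvariantMeasure.
Variable P : probability (seqspace n) R.
Hypotheses (P_OmegaA : P (OmegaA A) = 1%E)
  (P_shift : forall B, measurable B -> P (@Defs.shift n @^-1` B) = P B).

Lemma integral_FA : (\int[P]_x (FA A lam u x)%:E =
  (1 - lam^-1)%:E * \int[P]_x (u (x 0%N) ord0)%:E)%E.
Proof.
have supp := pairdist_OmegaA P_OmegaA; have bal := pairdist_balanced P_shift.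
under eq_integral do rewrite FAE.
rewrite (integral_coord01 P (G := fun a b => u a ord0 - A a b * u b ord0 / lam));
  last exact: FA_pair_ge0.
rewrite (integral_coord01 P (G := fun a _ => u a ord0)) => [|a _]; last exact: ltW.
rewrite -EFinM; congr _%:E.
have on_edges a b : pairdist P a b * A a b = pairdist P a b.
  by case: (A01 a b) => Aab; rewrite Aab ?mulr1 // supp ?mulr0 // Aab eq_sym oner_neq0.
transitivity (\sum_a \sum_b pairdist P a b * u a ord0 -
              lam^-1 * \sum_a \sum_b pairdist P a b * u b ord0).
  rewrite mulr_sumr -sumrB; apply: eq_bigr => a _.
  rewrite mulr_sumr -sumrB; apply: eq_bigr => b _.
  by rewrite -[X in _ * (X * _)](on_edges a b); ring.
by rewrite (balanced_sum_swap (fun b => u b ord0) bal) mulrBl mul1r.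
Qed.

Lemma integral_u_coord0_of_potential c (h : 'I_n.+1 -> R) :
  (forall a b, A a b = 1 -> u a ord0 - c = h b - h a) ->
  (\int[P]_x (u (x 0%N) ord0)%:E = c%:E)%E.
Proof.
move=> pot; rewrite (integral_coord01 P (G := fun a _ => u a ord0)) => [|a _]; last exact: ltW.
congr _%:E; apply: (balanced_mean_potential (e := fun a b => A a b == 1) (h := h)).
- exact: pairdist_balanced P_shift.
- exact: pairdist_OmegaA P_OmegaA.
- exact: pairdist_sum1.
- by move=> a b /eqP; exact: pot.
Qed.

End InvariantMeasure.

End PerronEigenvector.

Section PeriodicOrbits.
Variables (R : realType) (n : nat) (A : 'M[R]_n.+1) (lam : R) (u : 'cV[R]_n.+1).
Hypotheses (A01 : zero_one_mx A) (lam_gt0 : 0 < lam) (u_gt0 : forall i, 0 < u i ord0).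
Hypothesis Au : A *m u = lam *: u.

Lemma integral_FA_orbit m (g : 'I_m.+1 -> 'I_n.+1) : admissible_cycle A g ->
  (\int[orbit_prob R g]_x (FA A lam u x)%:E =
   ((1 - lam^-1) * ((m.+1%:R)^-1 * \sum_i u (g i) ord0))%:E)%E.
Proof.
move=> adm; have [P_OmegaA P_shift _] := orbit_prob_invariant_ergodic (R := R) adm.
rewrite integral_FA // (integral_orbit_prob_coord0 g (f := fun a => u a ord0)) ?EFinM //.
by move=> a; exact: ltW.
Qed.

Lemma cycle_average_of_orbit_integrals K m0 (g0 : 'I_m0.+1 -> 'I_n.+1) :
  (forall i j, 0 < (A ^+ K) i j) -> \sum_i u i ord0 = 1 -> admissible_cycle A g0 ->
  (forall m (g : 'I_m.+1 -> 'I_n.+1), admissible_cycle A g ->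
     (\int[orbit_prob R g]_x (FA A lam u x)%:E =
      \int[orbit_prob R g0]_x (FA A lam u x)%:E)%E) ->
  cycle_average_const A u ((m0.+1%:R)^-1 * \sum_i u (g0 i) ord0).
Proof.
move=> AK_gt0 u_sum1 adm0 same m g adm.
have [lam1 | lam_neq1] := eqVneq lam 1.
  have mean1 k (h : 'I_k.+1 -> 'I_n.+1) : (k.+1%:R)^-1 * \sum_i u (h i) ord0 = 1.
    under eq_bigr do rewrite (perron_root_eq1 A01 u_gt0 Au AK_gt0 u_sum1 lam1).
    by rewrite sumr_const card_ord mulVf ?pnatr_eq0.
  by rewrite !mean1.
have := same m g adm; rewrite !integral_FA_orbit // => -[].
by apply: mulfI; rewrite subr_eq0 eq_sym invr_eq1.
Qed.

End PeriodicOrbits.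

Unset Implicit Arguments.

Theorem proposition3p3 (R : realType) (n : nat) (A : 'M[R]_n.+1)
  (lam : R) (u v : 'cV[R]_n.+1) :
  zero_one_mx A -> primitive_mx A ->
  0 < lam ->
  (forall i, 0 < u i ord0) -> A *m u = lam *: u -> \sum_i u i ord0 = 1 ->
  (forall i, 0 < v i ord0) -> A^T *m v = lam *: v ->
  \sum_i u i ord0 * v i ord0 = 1 ->
  [/\ (forall P1 P2 : probability (seqspace n) R,
         invariant_ergodic_on A P1 -> invariant_ergodic_on A P2 ->
         (\int[P1]_x (FA A lam u x)%:E = \int[P2]_x (FA A lam u x)%:E)%E)
      <-> (exists c : R, 0 < c /\ cycle_average_const A u c),
      (forall c : R, cycle_average_const A u c ->
         c = \sum_i (u i ord0 * v i ord0) * u i ord0) &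
      (exists k : R, forall x, OmegaA A x -> FA A lam u x = k)
      <-> (exists r : R, forall i, \sum_j A i j = r)].
Proof.
move=> A01 prim lam_gt0 u_gt0 Au u_sum1 v_gt0 ATv uv1.
have [K [K_gt0 AK_gt0]] := primitive_pow_gt0 A01 lam_gt0 u_gt0 Au prim.
split; [split | |split].
- move=> same; have [m0 [g0 adm0]] := exists_admissible_cycle A01 K_gt0 AK_gt0.
  exists ((m0.+1%:R)^-1 * \sum_i u (g0 i) ord0); split.
    rewrite mulr_gt0 ?invr_gt0 ?ltr0n // (bigD1 ord0) //= ltr_pwDl //.
    by apply: sumr_ge0 => i _; exact: ltW.
  apply: (cycle_average_of_orbit_integrals A01 lam_gt0 u_gt0 Au AK_gt0 u_sum1 adm0).
  by move=> m g adm; apply: same; exact: orbit_prob_invariant_ergodic.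
- move=> [c [_ avg_c]] P1 P2 [P1_OmegaA P1_shift _] [P2_OmegaA P2_shift _].
  have [h pot] := potential_of_cycle_average A01 avg_c K_gt0 AK_gt0.
  by rewrite !integral_FA // !(integral_u_coord0_of_potential _ _ _ pot).
- move=> c avg_c; have [h pot] := potential_of_cycle_average A01 avg_c K_gt0 AK_gt0.
  exact: (cycle_average_value A01 lam_gt0 Au ATv uv1 pot).
- move=> [k FA_k]; exists lam; apply: (rowsum_eq_of_u_const u_gt0 Au (M := u ord0 ord0)) => i.
  exact: (u_const_of_FA_const A01 lam_gt0 u_gt0 Au K_gt0 AK_gt0 u_sum1 FA_k i ord0).
- move=> [r rows]; have u_const := u_const_of_rowsum_eq Au AK_gt0 v_gt0 ATv rows.
  exists (u ord0 ord0 - u ord0 ord0 / lam) => x Ox.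
  by rewrite FAE // (Ox 0%N) mul1r !(u_const _ ord0).
Qed.
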